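(* Let $\Theta\sim U[0,1]$ and let $T^{2,1,3/2,\Theta}$ be the random policy with $T^{2,1,3/2,\Theta}_i=\mathcal{R}^{3/2}_{2,1,\Theta}(T_i^* )$ for $i\in[n]$. Then $T^{2,1,3/2,\Theta}$ is resource-feasible with probability 1 and $\mathbb{E}_\Theta[F(T^{2,1,3/2,\Theta})]\le\frac{5}{6\ln 2}\cdot\mathrm{OPT}(P)$.
   Context: An instance consists of integers $n\ge 1$, $D\ge 1$; a joint ordering cost $K_0>0$; for each commodity $i\in[n]$ an ordering cost $K_i>0$ and a holding coefficient $H_i>0$; and resource coefficients $\alpha_{id}\ge 0$. A policy is $T=(T_1,\dots,T_n)\in\mathbb{R}_{>0}^n$; it is resource-feasible if $\sum_{i}\alpha_{id}/T_i\le 1$ for every $d\in[D]$. For $g>0$, $\Delta\ge 0$, $\mathcal{M}_{g,\Delta}=\{0,g,\dots,\lfloor\Delta/g\rfloor g\}$; $N(T,\Delta)=|\bigcup_{i}\mathcal{M}_{T_i,\Delta}|$; $J(T)=K_0\limsup_{\Delta\to\infty}N(T,\Delta)/\Delta$; $F(T)=J(T)+\sum_i(K_i/T_i+H_iT_i)$. The convex relaxation (P) is: minimize $K_0/T_{\min}+\sum_{i\in[n]}(K_i/T_i+H_iT_i)$ over $(T_{\min},T_1,\dots,T_n)$ subject to $T_i\ge T_{\min}\ge0$ for all $i$ and $\sum_i\alpha_{id}/T_i\le1$ for all $d$. $\mathrm{OPT}(P)$ is its optimal value and $T^*=(T^*_{\min},T^*_1,\dots,T^*_n)$ is a fixed optimal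 solution (with $T^*_{\min}>0$). For $\theta\in[0,1]$: $\mathcal{H}^{3/2}_{2,1,\theta}=\{2^{p+\theta}T^*_{\min}:p\in\mathbb{Z}\}\cup\{\tfrac32\cdot2^{p+\theta}T^*_{\min}:p\in\mathbb{Z}\}$ and $\mathcal{R}^{3/2}_{2,1,\theta}(t)=\min\{g\in\mathcal{H}^{3/2}_{2,1,\theta}:g>t\}$ for $t>0$. *)

From HB Require Import structures.
From mathcomp Require Import all_boot all_order all_algebra.
From mathcomp Require Import all_classical all_reals all_analysis.
Set Implicit Arguments. Unset Strict Implicit. Unset Printing Implicit Defensive.
Import Order.TTheory GRing.Theory Num.Theory.
Import numFieldNormedType.Exports.
Local Open Scope classical_set_scope.
Local Open Scope ring_scope.

Section Defs.
Variables (R : realType) (n D : nat).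

Definition resource_feasible (alpha : 'I_n -> 'I_D -> R) (T : 'I_n -> R) : Prop :=
  (forall i, 0 < T i) /\ (forall d : 'I_D, \sum_(i < n) alpha i d / T i <= 1).

Definition Mset (g Delta : R) : seq R :=
  [seq (k%:R * g) | k <- iota 0 (Num.truncn (Delta / g)).+1].

Definition Ncount (T : 'I_n -> R) (Delta : R) : nat :=
  size (undup (flatten [seq Mset (T i) Delta | i <- enum 'I_n])).

Definition Jcost (K0 : R) (T : 'I_n -> R) : \bar R :=
  (K0%:E * limf_esup (fun Delta : R => ((Ncount T Delta)%:R / Delta)%:E) (pinfty_nbhs R))%E.

Definition Fcost (K0 : R) (K H : 'I_n -> R) (T : 'I_n -> R) : \bar R :=
  (Jcost K0 T + (\sum_(i < n) (K i / T i + H i * T i))%:E)%E.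

Definition Pobj (K0 : R) (K H : 'I_n -> R) (tmin : R) (t : 'I_n -> R) : R :=
  K0 / tmin + \sum_(i < n) (K i / t i + H i * t i).

Definition Pfeas (alpha : 'I_n -> 'I_D -> R) (tmin : R) (t : 'I_n -> R) : Prop :=
  0 < tmin /\ (forall i, tmin <= t i) /\
  (forall d : 'I_D, \sum_(i < n) alpha i d / t i <= 1).

Definition Hgrid (Tmin theta : R) : set R :=
  [set g | exists p : int,
     g = powR 2 (p%:~R + theta) * Tmin \/
     g = (3 / 2) * powR 2 (p%:~R + theta) * Tmin].

Definition Rround (Tmin theta t : R) : R :=
  inf [set g | Hgrid Tmin theta g /\ t < g].

End Defs.

From HB Require Import structures.
From mathcomp Require Import all_boot all_order all_algebra.
From mathcomp Require Import all_classical all_reals all_analysis.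
From mathcomp Require Import measurable_realfun.
From mathcomp Require Import ring lra.
Set Implicit Arguments. Unset Strict Implicit. Unset Printing Implicit Defensive.
Import Order.TTheory GRing.Theory Num.Theory.
Import numFieldNormedType.Exports.
Local Open Scope classical_set_scope.
Local Open Scope ring_scope.

(* In log-scale [log2 (t / T*_min)] the grid H^{3/2}_{2,1,θ} is {p + θ} ∪ {p + θ + log2 (3/2)},
   so rounding T*_i up multiplies it by 2^(c(v) - v), where v = fracp (log2 (T*_i / T*_min) - θ)
   and c(v) is the offset of the first grid point above v in its period.  As θ runs over [0,1],
   v runs uniformly over [0,1), hence the expected ordering and holding costs are integrals of
   step exponentials: 7/(12 ln 2) K_i/T*_i and 5/(6 ln 2) H_i T*_i.  For the joint cost, every
   rounded period lies above T*_min, hence is 2^(j+1) B or (3/2) 2^j B for the largest power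
   grid point B <= T*_min; their multiples are multiples of B/2 (of B when T*_min >= (3/2) B)
   with density 1/2 (2/3), and the resulting bound on J also integrates to 5/(6 ln 2) K0/T*_min.
   Rounding up keeps the resource constraints. *)

Section powR2.
Variable R : realType.
Implicit Types x y : R.

Lemma ln2_gt0 : 0 < ln (2 : R).
Proof. by rewrite ln_gt0 // ltr1n. Qed.

Lemma powR2E x : 2 `^ x = expR (x * ln 2).
Proof. by rewrite /powR pnatr_eq0. Qed.

Lemma powR2D x y : 2 `^ (x + y) = 2 `^ x * 2 `^ y.
Proof. by rewrite powRD // pnatr_eq0 implybT. Qed.

Lemma ltr_powR2 x y : (2 `^ x < 2 `^ y) = (x < y).
Proof. by rewrite !powR2E ltr_expR ltr_pM2r ?ln2_gt0. Qed.

Lemma ler_powR2 x y : (2 `^ x <= 2 `^ y) = (x <= y).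
Proof. by rewrite !powR2E ler_expR ler_pM2r ?ln2_gt0. Qed.

Lemma powR2_int_shift (k p : int) x : (k <= p)%R ->
  2 `^ (p%:~R + x) = 2 ^+ `|p - k|%N * 2 `^ (k%:~R + x).
Proof.
move=> kp; rewrite -powR_mulrn // -powR2D; congr (2 `^ _).
by rewrite -[_%:R]/((`|p - k|%N : int)%:~R) gez0_abs ?subr_ge0 // intrB; lra.
Qed.

Definition log2 x := ln x / ln 2.

Lemma log2_ge0 x : 1 <= x -> 0 <= log2 x.
Proof. by move=> x1; rewrite divr_ge0 ?ln_ge0 // ler1n. Qed.

Lemma powR2_log2 x : 0 < x -> 2 `^ log2 x = x.
Proof.
by move=> x0; rewrite powR2E /log2 divfK ?lnK ?gt_eqF ?ln2_gt0.
Qed.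

Lemma mul_powR2_log2 x y : 0 < x -> 0 < y -> x * 2 `^ log2 (y / x) = y.
Proof. by move=> x0 y0; rewrite powR2_log2 ?divr_gt0 // mulrC divfK ?gt_eqF. Qed.

End powR2.

Section fracp.
Variable R : realType.
Implicit Types x y : R.

Definition fracp x := x - (Num.floor x)%:~R.

Lemma fracp_ge0 x : 0 <= fracp x.
Proof. by rewrite subr_ge0 floor_le. Qed.

Lemma fracp_lt1 x : fracp x < 1.
Proof. by rewrite ltrBlDl -intrD1 floorD1_gt. Qed.

Lemma fracp_subl x y : 0 <= y -> y <= fracp x -> fracp (x - y) = fracp x - y.
Proof.
move=> y0 yx; rewrite /fracp; suff -> : Num.floor (x - y) = Num.floor x by lra.
apply: floor_def; move: yx; have := floorD1_gt x; have := floor_le x.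
rewrite /fracp intrD => h1 h2 yx; apply/andP; split; lra.
Qed.

Lemma fracp_subr x y : fracp x < y -> y <= 1 -> fracp (x - y) = fracp x + 1 - y.
Proof.
move=> xy y1; rewrite /fracp; suff -> : Num.floor (x - y) = Num.floor x - 1.
  by rewrite intrB; lra.
apply: floor_def; move: xy; have := floorD1_gt x; have := floor_le x.
rewrite /fracp intrB intrD => h1 h2 xy; apply/andP; split; lra.
Qed.

End fracp.

Lemma ler_int_ltD1 (R : numDomainType) (a b : int) : (a%:~R < b%:~R + 1 :> R) -> (a <= b)%R.
Proof. by rewrite -intrD1 ltr_int ltzD1. Qed.

Section log_grid.
Variables (R : realType) (l : R).
Implicit Types (s th e v : R).

Definition log_grid th e := exists p : int, e = p%:~R + th \/ e = p%:~R + th + l.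

(* Within one period [0,1) of the grid, the first grid point strictly above v. *)
Definition step_up v := if v < l then l else 1.

Definition log_round s th :=
  th + (Num.floor (s - th))%:~R + step_up (fracp (s - th)).

Lemma log_round_subr s th :
  log_round s th - s = step_up (fracp (s - th)) - fracp (s - th).
Proof. by rewrite /log_round /fracp; lra. Qed.

Lemma log_round_grid s th : log_grid th (log_round s th).
Proof.
rewrite /log_round /step_up; case: ifP => _.
  by exists (Num.floor (s - th)); right; rewrite (addrC th).
by exists (Num.floor (s - th) + 1); left; rewrite intrD1; lra.
Qed.

Lemma log_round_gt s th : s < log_round s th.
Proof.
rewrite -subr_gt0 log_round_subr /step_up; have := fracp_lt1 (s - th).
by case: ifPn; rewrite ?ltNge ?negbK; lra.
Qed.

Lemma log_round_min (l_ge0 : 0 <= l) (l_lt1 : l < 1) s th e :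
  log_grid th e -> s < e -> log_round s th <= e.
Proof.
move=> [p ep] se; have := fracp_ge0 (s - th); have := fracp_lt1 (s - th).
rewrite /log_round /step_up /fracp; move: (Num.floor (s - th)) => k v1 v0.
have ltD1 := @ler_int_ltD1 R.
have le_kp : (k <= p)%R by apply: ltD1; case: ep => ep; lra.
case: ep => -> in se *.
  have : (k + 1 <= p)%R by apply: ltD1; rewrite intrD1; lra.
  by rewrite -(ler_int R) intrD1; case: ifP; lra.
case: ifPn => [|vl]; first by move: le_kp; rewrite -(ler_int R); lra.
have : (k + 1 <= p)%R by apply: ltD1; rewrite intrD1; move: vl; rewrite -leNgt; lra.
by rewrite -(ler_int R) intrD1; lra.
Qed.

Lemma le_log_round (l_ge0 : 0 <= l) (l_lt1 : l < 1) s s' th :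
  s <= s' -> log_round s th <= log_round s' th.
Proof.
move=> ss'; apply: log_round_min (log_round_grid _ _) _ => //.
exact: le_lt_trans ss' (log_round_gt _ _).
Qed.

Lemma log_grid_above (l_lt1 : l < 1) th (k : int) e :
  log_grid th e -> k%:~R + th < e ->
  exists j : nat, 2 `^ e = 2 ^+ j.+1 * 2 `^ (k%:~R + th)
                \/ 2 `^ e = 2 `^ l * 2 ^+ j * 2 `^ (k%:~R + th).
Proof.
have ltD1 := @ler_int_ltD1 R.
move=> [p [->|->]] ke.
  have kp : (k + 1 <= p)%R by apply: ltD1; rewrite intrD1; lra.
  exists `|p - (k + 1)%R|%N; left.
  by rewrite (powR2_int_shift _ kp) intrD1 -addrA (addrC 1) addrA powR2D powRr1 // exprS; ring.
have kp : (k <= p)%R by apply: ltD1; lra.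
exists `|p - k|%N; right.
by rewrite powR2D (powR2_int_shift _ kp); ring.
Qed.

End log_grid.

Section Rround_log.
Variable R : realType.
Implicit Types (Tmin th t g : R).
Local Notation L := (log2 (3 / 2 : R)).

Lemma log2_3half_gt0 : 0 < L.
Proof. by rewrite divr_gt0 ?ln2_gt0 // ln_gt0 //; lra. Qed.

Lemma log2_3half_lt1 : L < 1.
Proof. by rewrite ltr_pdivrMr ?ln2_gt0 // mul1r ltr_ln ?posrE //; lra. Qed.

Lemma powR2_log2_3half : 2 `^ L = 3 / 2.
Proof. by rewrite powR2_log2 //; lra. Qed.

Lemma Hgrid_log_grid Tmin th g :
  Hgrid Tmin th g <-> exists2 e, log_grid L th e & g = Tmin * 2 `^ e.
Proof.
split=> [[p [->|->]]|[e [p [->|->]] ->]].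
- by exists (p%:~R + th); [exists p; left | rewrite mulrC].
- exists (p%:~R + th + L); first by exists p; right.
  by rewrite [2 `^ (_ + L)]powR2D powR2_log2_3half; ring.
- by exists p; left; rewrite mulrC.
- by exists p; right; rewrite [2 `^ (_ + L)]powR2D powR2_log2_3half; ring.
Qed.

Lemma Rround_log_round Tmin th t : 0 < Tmin -> 0 < t ->
  Rround Tmin th t = Tmin * 2 `^ log_round L (log2 (t / Tmin)) th.
Proof.
move=> Tmin_gt0 t_gt0; set s := log2 (t / Tmin).
have ts : t = Tmin * 2 `^ s by rewrite mul_powR2_log2.
set g0 := Tmin * _.
have g0_min g : Hgrid Tmin th g /\ t < g -> g0 <= g.
  case=> /Hgrid_log_grid[e eG ->]; rewrite ts ltr_pM2l // ltr_powR2 => se.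
  rewrite ler_pM2l // ler_powR2 log_round_min //.
  - exact/ltW/log2_3half_gt0.
  - exact: log2_3half_lt1.
have g0_in : Hgrid Tmin th g0 /\ t < g0.
  split; first by apply/Hgrid_log_grid; exists (log_round L s th); first exact: log_round_grid.
  by rewrite ts ltr_pM2l // ltr_powR2 log_round_gt.
apply/le_anti/andP; split; first by apply: ge_inf => //; exists g0 => g /g0_min.
by apply: lb_le_inf; [exists g0 | move=> g /g0_min].
Qed.

End Rround_log.

Section fracp_integral.
Variable R : realType.
Local Notation mu := (@lebesgue_measure R).
Implicit Types (a b c d l s u v w x y z α : R).

Lemma measurable_fracp : measurable_fun setT (@fracp R).
Proof.
apply: measurable_funB => //; apply: nondecreasing_measurable => // u v uv.
by rewrite ler_int le_floor.
Qed.

Lemma integral_itv_split (h : R -> \bar R) x y z : x <= y -> y <= z ->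
  measurable_fun `[x, z] h ->
  (\int[mu]_(t in `[x, z]) h t
   = \int[mu]_(t in `[x, y]) h t + \int[mu]_(t in `[y, z]) h t)%E.
Proof.
move=> xy yz mh.
have xyz : `[x, z]%classic = `[x, y]%classic `|` `]y, z]%classic :> set R.
  by apply: itv_bndbnd_setU; rewrite bnd_simp.
rewrite xyz in mh *; rewrite integral_setU //; last first.
  apply/disj_setPLR => t; rewrite /= !in_itv /= => /andP[_ ty] /andP[yt _].
  by move: (lt_le_trans yt ty); rewrite ltxx.
rewrite integral_itv_obnd_cbnd //.
by apply: measurable_funS mh; [exact: measurableU | move=> t ?; right].
Qed.

Lemma is_derive_expR_affine c α d x :
  is_derive x 1 (fun y => c * expR (α * (d - y))) (- (c * α) * expR (α * (d - x))).
Proof.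
have inner : is_derive x 1 (fun y => α * (d - y)) (- α).
  have -> : - α = α *: (0 - 1) by rewrite /GRing.scale /=; ring.
  by apply: is_deriveZ; apply: is_deriveB.
have outer : is_derive (α * (d - x)) 1 (fun y => c * expR y) (c * expR (α * (d - x))).
  exact: is_deriveZ.
have := @is_derive1_comp R (fun y => c * expR y) (fun y => α * (d - y)) x _ _ outer inner.
by rewrite /comp; congr is_derive; ring.
Qed.

Lemma integral_itv_expR_affine (h : R -> R) c α d x y : α != 0 -> x <= y ->
  measurable_fun `]x, y[ h ->
  {in `]x, y[, forall t, h t = c * expR (α * (d - t))} ->
  (\int[mu]_(t in `[x, y]) (h t)%:E
   = ((c / α) * (expR (α * (d - x)) - expR (α * (d - y))))%:E)%E.
Proof.
move=> α0 + mh hE; rewrite le_eqVlt => /predU1P[<-|xy].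
  by rewrite set_itv1 integral_set1 subrr mulr0.
pose f t := c * expR (α * (d - t)).
pose F t := - (c / α) * expR (α * (d - t)).
have dF (t : R) : is_derive t 1 F (f t).
  by have := is_derive_expR_affine (- (c / α)) α d t; congr is_derive; rewrite /f; field.
have cont_of (g : R -> R) : (forall t, derivable g t 1) -> continuous g.
  by move=> dg t; apply/differentiable_continuous/derivable1_diffP.
have cF : continuous F by apply: cont_of => t; case: (dF t).
have cf : continuous f by apply: cont_of => t; case: (is_derive_expR_affine c α d t).
rewrite (@eq_integral_itv_bounded _ _ _ f) //; last first.
  by apply: measurable_funTS; exact: continuous_measurable_fun.
rewrite (@continuous_FTC2 _ _ F) //.
- by rewrite -EFinB /F; congr EFin; ring.
- exact: continuous_subspaceT.
- split; first by move=> t _; case: (dF t).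
    exact: cvg_at_right_filter (cF x).
  exact: cvg_at_left_filter (cF y).
- by move=> t _; rewrite derive1E; case: (dF t).
Qed.

(* The rounding factor 2^(step_up v - v) and its inverse are of this form. *)
Definition step_expR l a b α v := (if v < l then a else b) * expR (α * v).

Lemma step_expR_lt l a b α v : v < l -> step_expR l a b α v = a * expR (α * v).
Proof. by rewrite /step_expR => ->. Qed.

Lemma step_expR_ge l a b α v : l <= v -> step_expR l a b α v = b * expR (α * v).
Proof. by rewrite /step_expR ltNge => ->. Qed.

Lemma step_expR_ge0 l a b α v : 0 <= a -> 0 <= b -> 0 <= step_expR l a b α v.
Proof. by move=> a0 b0; rewrite mulr_ge0 ?expR_ge0 //; case: ifP. Qed.

Lemma measurable_step_expR_fracp l a b α s :
  measurable_fun setT (fun th : R => step_expR l a b α (fracp (s - th))).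
Proof.
have mv : measurable_fun setT (fun th : R => fracp (s - th)).
  by apply: measurableT_comp measurable_fracp _; exact: measurable_funB.
apply: measurable_funM.
  by apply: measurable_fun_ifT => //; exact: measurable_fun_ltr.
exact/measurableT_comp/measurable_funM.
Qed.

Definition step_expR_primitive l a b α v :=
  (if v <= l then a * (expR (α * v) - 1)
   else a * (expR (α * l) - 1) + b * (expR (α * v) - expR (α * l))) / α.

Lemma step_expR_primitive_ge l a b α v : l <= v ->
  step_expR_primitive l a b α v
  = (a * (expR (α * l) - 1) + b * (expR (α * v) - expR (α * l))) / α.
Proof.
rewrite /step_expR_primitive le_eqVlt => /predU1P[->|lv]; first by rewrite lexx subrr mulr0 addr0.
by rewrite leNgt lv.
Qed.

Lemma integral_step_expR_affine (h : R -> R) l a b α d x y : α != 0 -> x <= y ->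
  measurable_fun `[x, y] h -> {in `]x, y[, forall t, h t = step_expR l a b α (d - t)} ->
  (\int[mu]_(t in `[x, y]) (h t)%:E
   = (step_expR_primitive l a b α (d - x) - step_expR_primitive l a b α (d - y))%:E)%E.
Proof.
move=> α0 xy mh hE.
have hE' t : x < t -> t < y -> h t = step_expR l a b α (d - t).
  by move=> xt ty; apply: hE; rewrite in_itv /= xt.
have piece c x' y' : x <= x' -> x' <= y' -> y' <= y ->
    (forall t, x' < t -> t < y' -> h t = c * expR (α * (d - t))) ->
    (\int[mu]_(t in `[x', y']) (h t)%:E
     = ((c / α) * (expR (α * (d - x')) - expR (α * (d - y'))))%:E)%E.
  move=> xx' x'y' y'y hc; apply: integral_itv_expR_affine => //.
    by apply: measurable_funS mh => //; apply: subset_itvW.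
  by move=> t; rewrite in_itv => /andP[]; exact: hc.
case: (leP (d - x) l) => dxl.
  rewrite /step_expR_primitive !ifT; [|lra|lra].
  rewrite (piece a) ?lexx // => [|t xt ty]; last by rewrite hE' ?step_expR_lt //; lra.
  by congr EFin; field.
rewrite step_expR_primitive_ge; last exact: ltW.
case: (leP l (d - y)) => dyl.
  rewrite step_expR_primitive_ge // (piece b) ?lexx // => [|t xt ty].
    by congr EFin; field.
  by rewrite hE' ?step_expR_ge //; lra.
rewrite /step_expR_primitive ifT; last exact: ltW.
have xm : x <= d - l by lra.
have my : d - l <= y by lra.
rewrite (integral_itv_split xm my); last exact/measurable_EFinP.
rewrite (piece b) ?lexx // => [|t ? ?]; last by rewrite hE' ?step_expR_ge //; lra.
rewrite (piece a) ?lexx // => [|t ? ?]; last by rewrite hE' ?step_expR_lt //; lra.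
rewrite -EFinD (_ : d - (d - l) = l); last lra.
by congr EFin; field.
Qed.

(* θ ↦ fracp (s - θ) reflects [0, fracp s] and ]fracp s, 1] onto themselves. *)
Lemma integral_step_expR_fracp l a b α s : 0 <= l -> l <= 1 -> α != 0 ->
  (\int[mu]_(th in `[0%R, 1%R]) (step_expR l a b α (fracp (s - th)))%:E
   = ((a * (expR (α * l) - 1) + b * (expR α - expR (α * l))) / α)%:E)%E.
Proof.
move=> l0 l1 α0; pose h th := step_expR l a b α (fracp (s - th)).
under eq_integral => th _ do rewrite -/(h th).
have f0 := fracp_ge0 s; have f1 := fracp_lt1 s; set f := fracp s in f0 f1.
have mh x y : measurable_fun `[x, y] h.
  by apply: measurable_funTS; exact: measurable_step_expR_fracp.
have hl : {in `]0, f[, forall t, h t = step_expR l a b α (f - t)}.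
  by move=> t; rewrite in_itv => /andP[t0 tf]; rewrite /h fracp_subl // ltW.
have hr : {in `]f, 1[, forall t, h t = step_expR l a b α (f + 1 - t)}.
  by move=> t; rewrite in_itv => /andP[ft t1]; rewrite /h fracp_subr // ltW.
rewrite (integral_itv_split f0 (ltW f1)); last exact/measurable_EFinP.
rewrite (integral_step_expR_affine α0 f0 (mh 0 f) hl).
rewrite (integral_step_expR_affine α0 (ltW f1) (mh f 1) hr).
have G0 : step_expR_primitive l a b α 0 = 0.
  by rewrite /step_expR_primitive l0 mulr0 expR0 subrr mulr0 mul0r.
rewrite -EFinD subr0 subrr addrK (_ : f + 1 - f = 1); last lra.
by rewrite G0 [step_expR_primitive _ _ _ _ 1]step_expR_primitive_ge // mulr1; congr EFin; ring.
Qed.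

Lemma measurable_scaled_step_expR_fracp (D : set R) c l a b α s :
  measurable_fun D (fun th => (c * step_expR l a b α (fracp (s - th)))%:E).
Proof.
apply/measurable_EFinP/measurable_funTS/measurable_funM => //.
exact: measurable_step_expR_fracp.
Qed.

Lemma integral_scaled_step_expR_fracp c l a b α s :
  0 <= c -> 0 <= a -> 0 <= b -> 0 <= l -> l <= 1 -> α != 0 ->
  (\int[mu]_(th in `[0%R, 1%R]) (c * step_expR l a b α (fracp (s - th)))%:E
   = (c * ((a * (expR (α * l) - 1) + b * (expR α - expR (α * l))) / α))%:E)%E.
Proof.
move=> c0 a0 b0 l0 l1 α0; under eq_integral => th _ do rewrite EFinM.
rewrite ge0_integralZl_EFin // ?integral_step_expR_fracp //.
- by move=> th _; rewrite lee_fin step_expR_ge0.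
- by apply/measurable_EFinP/measurable_funTS; exact: measurable_step_expR_fracp.
Qed.

End fracp_integral.

Section integral_monotone.
Local Open Scope ereal_scope.
Context d (T : measurableType d) (R : realType) (mu : {measure set T -> \bar R}).
Implicit Types (D : set T) (f g : T -> \bar R).

Lemma ge0_le_integral_nonmeasurable D f g :
  (forall x, D x -> 0 <= f x) -> (forall x, D x -> f x <= g x) ->
  \int[mu]_(x in D) f x <= \int[mu]_(x in D) g x.
Proof.
move=> f0 fg; have g0 x : D x -> 0 <= g x by move=> Dx; exact: le_trans (f0 x Dx) (fg x Dx).
rewrite (ge0_integralE mu f0) (ge0_integralE mu g0).
apply: ereal_sup_le => _ [h hf <-]; exists h => //= x.
apply: le_trans (hf x) _; rewrite /patch; case: ifP => // /[!inE]; exact: fg.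
Qed.

(* θ ↦ F(T^θ) is not known to be measurable, hence this variant of [ge0_le_integral]. *)
Lemma le_integral_nonmeasurable D f g :
  (forall x, D x -> 0 <= g x) -> (forall x, D x -> f x <= g x) ->
  \int[mu]_(x in D) f x <= \int[mu]_(x in D) g x.
Proof.
move=> g0 fg; rewrite integralE [leRHS]integralE; apply: leeB.
  apply: ge0_le_integral_nonmeasurable => x Dx; first exact: funepos_ge0.
  by apply: (@funepos_le _ _ D) => //; [move=> y /[!inE] /fg | rewrite inE].
apply: (@le_trans _ _ 0); last by apply: integral_ge0 => x _; exact: funeneg_ge0.
rewrite integral0_eq // => x Dx.
by apply: (@ge0_funenegE _ _ D) => //; rewrite inE.
Qed.

End integral_monotone.

Section periodic_count.
Local Open Scope nat_scope.
Variables (P : pred nat) (q : nat).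
Hypothesis P_periodic : forall x, P (x + q) = P x.

Lemma periodic_addmul b x : P (q * b + x) = P x.
Proof.
elim: b x => [|b IH] x; first by rewrite muln0.
by rewrite mulnS (addnC q) -addnA (addnC q) addnA P_periodic IH.
Qed.

Lemma count_iota_periodic b : count P (iota 0 (q * b)) = count P (iota 0 q) * b.
Proof.
elim: b => [|b IH]; first by rewrite !muln0.
rewrite mulnS addnC iotaD count_cat IH add0n -(addn0 (q * b)) iotaDl count_map.
by rewrite mulnS addnC; congr addn; apply: eq_count => x /=; rewrite periodic_addmul.
Qed.

Lemma count_iota_periodic_le M : 0 < q ->
  count P (iota 0 M.+1) <= count P (iota 0 q) * (M %/ q).+1.
Proof.
move=> q0; rewrite -count_iota_periodic.
have h : M.+1 <= q * (M %/ q).+1 by rewrite mulnC; exact: ltn_ceil.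
by rewrite -(subnKC h) iotaD count_cat leq_addr.
Qed.

End periodic_count.

Section dvdn_or.
Local Open Scope nat_scope.

Definition dvdn_or (a b : nat) : pred nat := fun N => (a %| N) || (b %| N).

Lemma dvdn_orD a b N : dvdn_or a b (N + a * b) = dvdn_or a b N.
Proof. by rewrite /dvdn_or (@dvdn_addl (a * b) a) ?dvdn_mulr // dvdn_addl ?dvdn_mull. Qed.

Lemma dvdn_or_mull a b m k : dvdn_or a b m -> dvdn_or a b (k * m).
Proof. by case/orP=> dvd_m; apply/orP; [left | right]; exact: dvdn_mull. Qed.

End dvdn_or.

Section Jcost_bound.
Variables (R : realType) (n : nat).
Implicit Types (T : 'I_n -> R) (S : pred nat).

Lemma Ncount_le_count T (u : R) S (Δ : R) : 0 < u -> 0 <= Δ -> (forall i, 0 < T i) ->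
  (forall i, exists2 m : nat, T i = m%:R * u & forall k, S (k * m)%N) ->
  (Ncount T Δ <= count S (iota 0 (Num.truncn (Δ / u)).+1))%N.
Proof.
move=> u0 Δ0 T0 hT; rewrite /Ncount; set M := Num.truncn (Δ / u).
apply: (@leq_trans (size [seq N%:R * u | N <- [seq N <- iota 0 M.+1 | S N]])); last first.
  by rewrite size_map size_filter.
apply: uniq_leq_size; first exact: undup_uniq.
move=> x; rewrite mem_undup => /flattenP [_ /mapP [i _ ->]] /mapP [k].
rewrite mem_iota add0n ltnS => kΔ ->.
have [m Tm Sm] := hT i.
have hk : k%:R <= Δ / T i by rewrite -truncn_ge_nat // divr_ge0 // ltW.
apply/mapP; exists (k * m)%N; last by rewrite Tm natrM mulrA.
rewrite mem_filter Sm mem_iota add0n /= ltnS /M truncn_ge_nat; last first.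
  by rewrite divr_ge0 // ltW.
by rewrite ler_pdivlMr // natrM -mulrA -Tm -ler_pdivlMr.
Qed.

Lemma count_iota_truncn_le S (q r : nat) (Δ u : R) : (0 < q)%N -> 0 < u -> 0 <= Δ ->
  (forall x, S (x + q)%N = S x) -> count S (iota 0 q) = r ->
  (count S (iota 0 (Num.truncn (Δ / u)).+1))%:R <= r%:R / q%:R * Δ / u + r%:R.
Proof.
move=> q0 u0 Δ0 S_per Sq; set M := Num.truncn (Δ / u).
apply: (@le_trans _ _ (r * (M %/ q).+1)%N%:R).
  by rewrite ler_nat -Sq count_iota_periodic_le.
rewrite natrM -addn1 natrD mulrDr mulr1 lerD2r -!mulrA ler_wpM2l //.
have hM : (M %/ q)%:R <= M%:R / q%:R :> R.
  by rewrite ler_pdivlMr ?ltr0n // -natrM ler_nat leq_divM.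
apply: le_trans hM _; rewrite [M%:R / _]mulrC ler_wpM2l ?invr_ge0 //.
by rewrite /M truncn_le divr_ge0 // ltW.
Qed.

Lemma Jcost_le_linear (K0 : R) T (u c C : R) : 0 <= K0 -> 0 <= C ->
  (forall Δ, 0 < Δ -> (Ncount T Δ)%:R <= c * Δ / u + C) ->
  (Jcost K0 T <= (K0 * (c / u))%:E)%E.
Proof.
move=> K00 C0 hN; rewrite /Jcost EFinM; apply: lee_wpmul2l; first by rewrite lee_fin.
apply/lee_addgt0Pr => e e0; have Ce : 0 <= C / e by rewrite divr_ge0 // ltW.
apply: le_trans.
  apply: ereal_inf_lbound; exists [set Δ : R | C / e + 1 < Δ]; last reflexivity.
  by exists (C / e + 1); split => //; rewrite realE addr_ge0.
apply: ge_ereal_sup => _ [Δ /= hΔ <-]; rewrite -EFinD lee_fin.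
have Δ0 : 0 < Δ by lra.
rewrite ler_pdivrMr // (le_trans (hN _ Δ0)) // mulrDl [c / u * Δ]mulrAC lerD2l.
have : C / e < Δ by lra.
by rewrite ltr_pdivrMr // => /ltW; rewrite mulrC.
Qed.

Lemma Jcost_le_periodic (K0 u : R) T S (q r : nat) :
  0 <= K0 -> 0 < u -> (0 < q)%N -> (forall x, S (x + q)%N = S x) ->
  count S (iota 0 q) = r -> (forall i, 0 < T i) ->
  (forall i, exists2 m : nat, T i = m%:R * u & forall k, S (k * m)%N) ->
  (Jcost K0 T <= (K0 * (r%:R / q%:R / u))%:E)%E.
Proof.
move=> K00 u0 q0 S_per Sq T0 hT.
apply: (@Jcost_le_linear _ _ _ _ r%:R) => // Δ Δ0.
apply: le_trans (count_iota_truncn_le q0 u0 (ltW Δ0) S_per Sq).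
by rewrite ler_nat Ncount_le_count // ltW.
Qed.

End Jcost_bound.

Definition grid_above (R : realType) (B t : R) :=
  exists j : nat, t = 2 ^+ j.+1 * B \/ t = 3 / 2 * 2 ^+ j * B.

Section Jcost_grid.
Variables (R : realType) (n : nat).
Implicit Types (B : R) (T : 'I_n -> R).

(* All T i are B/2 times 4 2^j or 3 2^j, so every multiple of some T i is B/2 times an
   integer divisible by 3 or 4: density 1/2. *)
Lemma Jcost_grid_above_le (K0 : R) B T : 0 <= K0 -> 0 < B -> (forall i, 0 < T i) ->
  (forall i, grid_above B (T i)) -> (Jcost K0 T <= (K0 / B)%:E)%E.
Proof.
move=> K00 B0 T0 TB; have -> : K0 / B = K0 * (6%:R / 12%:R / (B / 2)).
  by field; rewrite gt_eqF.
apply: (Jcost_le_periodic (S := dvdn_or 3 4)) => //; first by rewrite divr_gt0.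
  exact: dvdn_orD.
move=> i; have [j [->|->]] := TB i.
  exists (4 * 2 ^ j)%N; last by move=> m; apply/dvdn_or_mull/orP; right; exact: dvdn_mulr.
  by rewrite natrM natrX exprS; field.
exists (3 * 2 ^ j)%N; last by move=> m; apply/dvdn_or_mull/orP; left; exact: dvdn_mulr.
by rewrite natrM natrX; field.
Qed.

(* Here 3/2 B is excluded, so all T i are B times 2 2^j or 3 2^j: density 2/3. *)
Lemma Jcost_grid_above2_le (K0 : R) B T : 0 <= K0 -> 0 < B -> (forall i, 0 < T i) ->
  (forall i, grid_above B (T i)) -> (forall i, 2 * B <= T i) ->
  (Jcost K0 T <= (2 / 3 * (K0 / B))%:E)%E.
Proof.
move=> K00 B0 T0 TB T2B; have -> : 2 / 3 * (K0 / B) = K0 * (4%:R / 6%:R / B).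
  by field; rewrite gt_eqF.
apply: (Jcost_le_periodic (S := dvdn_or 2 3)) => //; first exact: dvdn_orD.
move=> i; have := T2B i; have [j [->|->]] := TB i => T2B_i.
  exists (2 * 2 ^ j)%N; last by move=> m; apply/dvdn_or_mull/orP; left; exact: dvdn_mulr.
  by rewrite natrM natrX exprS.
case: j => [|j] in T2B_i *; first by rewrite expr0 in T2B_i; lra.
exists (3 * 2 ^ j)%N; last by move=> m; apply/dvdn_or_mull/orP; right; exact: dvdn_mulr.
by rewrite natrM natrX exprS; field.
Qed.

Local Notation L := (log2 (3 / 2 : R)).

Lemma Jcost_log_round_le (K0 Tmin th : R) (e : 'I_n -> R) : 0 <= K0 -> 0 < Tmin ->
  (forall i, log_grid L th (e i)) -> (forall i, log_round L 0 th <= e i) ->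
  (Jcost K0 (fun i => Tmin * 2 `^ e i)%R
   <= (K0 / Tmin * step_expR L 1 (2 / 3) (ln 2) (fracp (0 - th)))%:E)%E.
Proof.
move=> K00 Tmin0 eG ege; have T0 i : 0 < Tmin * 2 `^ e i by rewrite mulr_gt0 // powR_gt0.
move: ege; rewrite /log_round !sub0r /step_up.
set k := Num.floor (- th); set v := fracp (- th) => ege.
set B := Tmin * 2 `^ (k%:~R + th); have B0 : 0 < B by rewrite mulr_gt0 // powR_gt0.
have KB : K0 / B = K0 / Tmin * expR (ln 2 * v).
  rewrite /B (_ : k%:~R + th = - v); last by rewrite /v /fracp -/k; lra.
  by rewrite powRN powR2E (mulrC v); field; rewrite !gt_eqF ?expR_gt0.
have TB i : grid_above B (Tmin * 2 `^ e i).
  have [|j [->|->]] := log_grid_above (log2_3half_lt1 R) (eG i) (k := k).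
  - by have := ege i; have := log2_3half_gt0 R; case: ifP; lra.
  - by exists j; left; rewrite /B; ring.
  - by exists j; right; rewrite /B powR2_log2_3half; ring.
case: (ltP v L) => vL.
  by rewrite step_expR_lt // mul1r -KB; apply: Jcost_grid_above_le.
rewrite step_expR_ge // mulrCA -KB; apply: Jcost_grid_above2_le => // i.
have -> : 2 * B = Tmin * 2 `^ (k%:~R + th + 1) by rewrite powR2D powRr1 // /B; ring.
by rewrite ler_pM2l // ler_powR2; have := ege i; rewrite ltNge vL /=; lra.
Qed.
End Jcost_grid.

Section rounded_policy.
Variable R : realType.
Local Notation L := (log2 (3 / 2 : R)).
Implicit Types (Tmin t th v : R).

Lemma expR_ln2_log2_3half : expR (ln 2 * L) = 3 / 2.
Proof. by rewrite mulrC -powR2E powR2_log2_3half. Qed.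

Lemma powR2_step_up_sub v : 2 `^ (step_up L v - v) = step_expR L (3 / 2) 2 (- ln 2) v.
Proof.
rewrite /step_expR (_ : - ln 2 * v = - (v * ln 2)); last by ring.
rewrite powR2D powRN [2 `^ v]powR2E -expRN /step_up.
by case: ifP => _; rewrite ?powR2_log2_3half ?powRr1.
Qed.

Lemma powR2_sub_step_up v : 2 `^ (v - step_up L v) = step_expR L (2 / 3) (1 / 2) (ln 2) v.
Proof.
rewrite -opprB powRN powR2_step_up_sub /step_expR mulNr expRN invfM.
by rewrite invrK; case: ifP => _; field.
Qed.

Lemma Rround_ratio Tmin th t : 0 < Tmin -> 0 < t ->
  Rround Tmin th t = t * 2 `^ (step_up L (fracp (log2 (t / Tmin) - th))
                              - fracp (log2 (t / Tmin) - th)).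
Proof.
move=> Tmin0 t0; rewrite Rround_log_round // -log_round_subr powR2D powRN mulrA.
by rewrite powR2_log2 ?divr_gt0 //; field; rewrite !gt_eqF.
Qed.

Lemma Rround_ge Tmin th t : 0 < Tmin -> 0 < t -> t <= Rround Tmin th t.
Proof.
move=> Tmin0 t0; rewrite Rround_log_round // -{1}(mul_powR2_log2 Tmin0 t0).
by rewrite ler_pM2l // ler_powR2; exact/ltW/log_round_gt.
Qed.

End rounded_policy.

Lemma resource_feasible_ge (R : realType) (n D : nat) (alpha : 'I_n -> 'I_D -> R)
    (T T' : 'I_n -> R) :
  (forall i d, 0 <= alpha i d) -> (forall i, 0 < T i) -> (forall i, T i <= T' i) ->
  (forall d, \sum_(i < n) alpha i d / T i <= 1) -> resource_feasible alpha T'.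
Proof.
move=> alpha0 T0 TT' feas; have T'0 i : 0 < T' i := lt_le_trans (T0 i) (TT' i).
split=> // d; apply: le_trans (feas d); apply: ler_sum => i _.
by rewrite ler_wpM2l // lef_pV2 ?posrE.
Qed.

Section cost_bound.
Variables (R : realType) (n : nat) (K0 : R) (K H : 'I_n -> R) (Tmin : R) (Tstar : 'I_n -> R).
Local Notation L := (log2 (3 / 2 : R)).
Local Notation v i th := (fracp (log2 (Tstar i / Tmin) - th)).

Definition joint_term th : \bar R :=
  (K0 / Tmin * step_expR L 1 (2 / 3) (ln 2) (fracp (0 - th)))%:E.
Definition order_term i th : \bar R :=
  (K i / Tstar i * step_expR L (2 / 3) (1 / 2) (ln 2) (v i th))%:E.
Definition holding_term i th : \bar R :=
  (H i * Tstar i * step_expR L (3 / 2) 2 (- ln 2) (v i th))%:E.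

Definition cost_bound th : \bar R :=
  (joint_term th + \sum_(i < n) (order_term i th + holding_term i th))%E.

Lemma Fcost_Rround_le th : 0 <= K0 -> 0 < Tmin -> (forall i, Tmin <= Tstar i) ->
  (Fcost K0 K H (fun i => Rround Tmin th (Tstar i)) <= cost_bound th)%E.
Proof.
move=> K00 Tmin0 TminT; have T0 i : 0 < Tstar i := lt_le_trans Tmin0 (TminT i).
apply: leeD.
  have -> : (fun i => Rround Tmin th (Tstar i))
            = fun i => (Tmin * 2 `^ log_round L (log2 (Tstar i / Tmin)) th)%R.
    by apply/funext => i; rewrite Rround_log_round.
  apply: Jcost_log_round_le => // i; first exact: log_round_grid.
  apply: le_log_round; [exact/ltW/log2_3half_gt0 | exact: log2_3half_lt1 |].
  by apply: log2_ge0; rewrite ler_pdivlMr // mul1r.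
rewrite sumEFin lee_fin le_eqVlt; apply/orP; left; apply/eqP.
apply: eq_bigr => i _; rewrite Rround_ratio // -powR2_step_up_sub -powR2_sub_step_up.
rewrite -opprB powRN; field.
by rewrite !gt_eqF ?powR_gt0.
Qed.

Hypotheses (K0_ge0 : 0 <= K0) (Tmin_ge0 : 0 <= Tmin) (K_ge0 : forall i, 0 <= K i)
  (H_ge0 : forall i, 0 <= H i) (Tstar_ge0 : forall i, 0 <= Tstar i).

Local Notation mu := (@lebesgue_measure R).
Let L0 : 0 <= L := ltW (log2_3half_gt0 R).
Let L1 : L <= 1 := ltW (log2_3half_lt1 R).
Let ln2_neq0 : ln 2 != 0 :> R := lt0r_neq0 (ln2_gt0 R).
Let expR_ln2 : expR (ln 2) = 2 :> R.
Proof. by rewrite lnK ?posrE. Qed.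

Lemma joint_term_ge0 th : (0 <= joint_term th)%E.
Proof. by rewrite lee_fin mulr_ge0 ?divr_ge0 ?step_expR_ge0 //; lra. Qed.

Lemma order_term_ge0 i th : (0 <= order_term i th)%E.
Proof. by rewrite lee_fin mulr_ge0 ?divr_ge0 ?step_expR_ge0 //; lra. Qed.

Lemma holding_term_ge0 i th : (0 <= holding_term i th)%E.
Proof. by rewrite lee_fin; apply: mulr_ge0; [exact: mulr_ge0 | apply: step_expR_ge0; lra]. Qed.

Lemma cost_bound_ge0 th : (0 <= cost_bound th)%E.
Proof.
apply: adde_ge0; first exact: joint_term_ge0.
by apply: sume_ge0 => i _; apply: adde_ge0; [exact: order_term_ge0 | exact: holding_term_ge0].
Qed.

Lemma integral_joint_term :
  (\int[mu]_(th in `[0%R, 1%R]) joint_term th = (5 / (6 * ln 2) * (K0 / Tmin))%:E)%E.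
Proof.
have n23 : 0 <= 2 / 3 :> R by lra.
rewrite /joint_term integral_scaled_step_expR_fracp ?(divr_ge0 K0_ge0) //.
by rewrite expR_ln2 expR_ln2_log2_3half mulrC; congr (EFin (_ * _)); field.
Qed.

Lemma integral_order_term i :
  (\int[mu]_(th in `[0%R, 1%R]) order_term i th = (7 / (12 * ln 2) * (K i / Tstar i))%:E)%E.
Proof.
have n12 : 0 <= 1 / 2 :> R by lra.
have n23 : 0 <= 2 / 3 :> R by lra.
rewrite /order_term integral_scaled_step_expR_fracp ?(divr_ge0 (K_ge0 i)) //.
by rewrite expR_ln2 expR_ln2_log2_3half mulrC; congr (EFin (_ * _)); field.
Qed.

Lemma integral_holding_term i :
  (\int[mu]_(th in `[0%R, 1%R]) holding_term i th = (5 / (6 * ln 2) * (H i * Tstar i))%:E)%E.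
Proof.
have n32 : 0 <= 3 / 2 :> R by lra.
rewrite /holding_term integral_scaled_step_expR_fracp ?(mulr_ge0 (H_ge0 i)) ?oppr_eq0 //.
by rewrite mulNr !expRN expR_ln2 expR_ln2_log2_3half mulrC; congr (EFin (_ * _)); field.
Qed.

Lemma integral_cost_bound :
  (\int[mu]_(th in `[0%R, 1%R]) cost_bound th
   = (5 / (6 * ln 2) * (K0 / Tmin) + \sum_(i < n) (7 / (12 * ln 2) * (K i / Tstar i)
                                     + 5 / (6 * ln 2) * (H i * Tstar i)))%:E)%E.
Proof.
have mK i : measurable_fun (`[0%R, 1%R] : set R) (order_term i).
  exact: measurable_scaled_step_expR_fracp.
have mH i : measurable_fun (`[0%R, 1%R] : set R) (holding_term i).
  exact: measurable_scaled_step_expR_fracp.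
have mKH i : measurable_fun (`[0%R, 1%R] : set R) (order_term i \+ holding_term i)%E.
  exact: emeasurable_funD.
have KH_ge0 i th : (0 <= order_term i th + holding_term i th)%E.
  by apply: adde_ge0; [exact: order_term_ge0 | exact: holding_term_ge0].
rewrite ge0_integralD //; first last.
- exact: emeasurable_sum.
- by move=> th _; exact: sume_ge0.
- exact: measurable_scaled_step_expR_fracp.
- by move=> th _; exact: joint_term_ge0.
rewrite ge0_integral_sum //.
under eq_bigr => i _.
  rewrite ge0_integralD //; first last.
  - exact: mH.
  - by move=> th _; exact: holding_term_ge0.
  - exact: mK.
  - by move=> th _; exact: order_term_ge0.
  by rewrite integral_order_term integral_holding_term -EFinD; over.
by rewrite integral_joint_term sumEFin -EFinD.
Qed.

Lemma mean_cost_bound_le :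
  5 / (6 * ln 2) * (K0 / Tmin) + \sum_(i < n) (7 / (12 * ln 2) * (K i / Tstar i)
                                             + 5 / (6 * ln 2) * (H i * Tstar i))
  <= 5 / (6 * ln 2) * Pobj K0 K H Tmin Tstar.
Proof.
have l2 : 0 < (ln 2)^-1 :> R by rewrite invr_gt0 ln2_gt0.
rewrite /Pobj mulrDr mulr_sumr lerD2l; apply: ler_sum => i _.
rewrite mulrDr lerD2r ler_wpM2r ?divr_ge0 //.
by rewrite !invfM !mulrA ler_wpM2r ?ltW //; lra.
Qed.

End cost_bound.

Theorem lemma4p2 (R : realType) (n D : nat)
  (K0 : R) (K H : 'I_n -> R) (alpha : 'I_n -> 'I_D -> R)
  (Tmin : R) (Tstar : 'I_n -> R) :
  (0 < n)%N -> (0 < D)%N -> 0 < K0 ->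
  (forall i, 0 < K i) -> (forall i, 0 < H i) ->
  (forall i d, 0 <= alpha i d) ->
  Pfeas alpha Tmin Tstar ->
  (forall tmin t, Pfeas alpha tmin t ->
     Pobj K0 K H Tmin Tstar <= Pobj K0 K H tmin t) ->
  let Ttheta := fun (theta : R) (i : 'I_n) => Rround Tmin theta (Tstar i) in
  {ae (@lebesgue_measure R), forall theta : R,
     theta \in `[0, 1] -> resource_feasible alpha (Ttheta theta)} /\
  (\int[@lebesgue_measure R]_(theta in `[0%R, 1%R]) Fcost K0 K H (Ttheta theta)
     <= ((5 / (6 * ln 2)) * Pobj K0 K H Tmin Tstar)%:E)%E.
Proof.
move=> _ _ K0_gt0 K_gt0 H_gt0 alpha_ge0 [Tmin_gt0 [Tmin_le feas]] _ Ttheta.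
have Tstar_gt0 i : 0 < Tstar i := lt_le_trans Tmin_gt0 (Tmin_le i).
split.
  apply: aeW => th _; apply: (resource_feasible_ge alpha_ge0 Tstar_gt0 _ feas) => i.
  exact: Rround_ge Tmin_gt0 (Tstar_gt0 i).
have K0_ge0 := ltW K0_gt0; have Tmin_ge0 := ltW Tmin_gt0.
have K_ge0 i := ltW (K_gt0 i); have H_ge0 i := ltW (H_gt0 i).
have Tstar_ge0 i := ltW (Tstar_gt0 i).
apply: (@le_trans _ _ (\int[@lebesgue_measure R]_(th in `[0%R, 1%R])
                         cost_bound K0 K H Tmin Tstar th)%E).
  by apply: le_integral_nonmeasurable => th _; [apply: cost_bound_ge0 | apply: Fcost_Rround_le].
by rewrite integral_cost_bound // lee_fin mean_cost_bound_le.
Qed.
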